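(* For no traffic pattern in a multicast switch does the enhanced conflict graph contain an induced subgraph isomorphic to the Grötzsch graph.
   Context: A flow is $(i,J)$ with input $i$ and nonempty fanout set $J$ of outputs; a traffic pattern is a finite set of flows; subflows are $(i,J,j)$ with $j\in J$. Enhanced conflict graph: one vertex per subflow; distinct subflows $(i,J,j),(i',J',j')$ adjacent iff $j=j'$, or $i=i'$ and $J\ne J'$. The Grötzsch graph is the 11-vertex triangle-free graph with chromatic number 4 obtained by applying the Mycielski construction to the 5-cycle. *)

From mathcomp Require Import all_boot.
Set Implicit Arguments. Unset Strict Implicit. Unset Printing Implicit Defensive.

Definition flow (I O : finType) := (I * {set O})%type.
Definition subflow_t (I O : finType) := (I * {set O} * O)%type.

Definition traffic_pattern (I O : finType) (T : {set flow I O}) : Prop :=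
  forall f, f \in T -> f.2 != set0.

Definition is_subflow (I O : finType) (T : {set flow I O}) (s : subflow_t I O) : bool :=
  (s.1 \in T) && (s.2 \in s.1.2).

Definition ecg_adj (I O : finType) (s t : subflow_t I O) : bool :=
  (s != t) && ((s.2 == t.2) || ((s.1.1 == t.1.1) && (s.1.2 != t.1.2))).

(* Mycielski construction of a graph e on T: vertices are the originals
   (Some (inl x)), the shadows (Some (inr x)) and the hub (None). *)
Definition mycielski (T : finType) (e : rel T) : rel (option (T + T)) :=
  fun a b =>
    match a, b with
    | Some (inl x), Some (inl y) => e x y
    | Some (inl x), Some (inr y) => e x y
    | Some (inr x), Some (inl y) => e x y
    | Some (inr _), Some (inr _) => false
    | Some (inr _), None => true
    | None, Some (inr _) => true
    | _, _ => false
    end.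

Definition cycle5 : rel 'I_5 :=
  fun x y => (y == (x.+1 %% 5) :> nat) || (x == (y.+1 %% 5) :> nat).

Definition grotzsch_vertex := option ('I_5 + 'I_5).
Definition grotzsch : rel grotzsch_vertex := mycielski cycle5.

Definition ecg_has_induced_grotzsch (I O : finType) (T : {set flow I O}) : Prop :=
  exists phi : grotzsch_vertex -> subflow_t I O,
    injective phi /\
    (forall v, is_subflow T (phi v)) /\
    (forall u v, ecg_adj (phi u) (phi v) = grotzsch u v).

(* The five shadow vertices of the Groetzsch graph are pairwise nonadjacent
   and have the hub as common neighbour.  Distinct subflows with the same
   output are adjacent, so at most one shadow shares the hub's output; every
   other shadow meets the hub through the hub's input with a different fanout,
   and pairwise nonadjacency then puts all these shadows in a single flow.
   But a subflow adjacent to two subflows of a flow is adjacent to every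
   subflow of that flow, while the original vertex m sees the shadows m+1 and
   m-1 and not the shadow m+2; choosing m to be the exceptional shadow's index
   keeps all three shadows inside the common flow. *)

From mathcomp Require Import all_boot zmodp.
Set Implicit Arguments. Unset Strict Implicit. Unset Printing Implicit Defensive.

Section EnhancedConflictGraph.
Variables I O : finType.
Implicit Types s t u x : subflow_t I O.

Lemma ecg_adj_same_output s t : s != t -> s.2 = t.2 -> ecg_adj s t.
Proof. by rewrite /ecg_adj => -> ->; rewrite eqxx. Qed.

Lemma ecg_adj_other_output x s :
  ecg_adj x s -> x.2 != s.2 -> x.1.1 = s.1.1 /\ x.1.2 != s.1.2.
Proof. by case/andP=> _ /orP[-> // | /andP[/eqP]]. Qed.

Lemma ecg_common_neighbor_same_flow x s t :
  ecg_adj x s -> ecg_adj x t -> ~~ ecg_adj s t -> x.2 != s.2 -> x.2 != t.2 ->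
  s.1 = t.1.
Proof.
move=> /ecg_adj_other_output xs /ecg_adj_other_output xt.
move=> nst /xs[xs_in _] /xt[xt_in _].
have [-> //|neq_st] := eqVneq s t.
move: nst; rewrite /ecg_adj neq_st -xs_in -xt_in eqxx /= negb_or negbK.
case/andP=> _ /eqP eq_fanout.
by rewrite [s.1]surjective_pairing [t.1]surjective_pairing -xs_in -xt_in eq_fanout.
Qed.

Lemma ecg_adj_flow x s t u :
  s.1 = t.1 -> s != t -> ecg_adj x s -> ecg_adj x t -> u.1 = s.1 -> x != u ->
  ecg_adj x u.
Proof.
move=> st_flow neq_st xs xt us_flow neq_xu.
have neq_out : s.2 != t.2.
  apply: contraNneq neq_st => st_out.
  by rewrite [s]surjective_pairing [t]surjective_pairing st_flow st_out.
have [x_in x_fanout] : x.1.1 = s.1.1 /\ x.1.2 != s.1.2.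
  have [xs_out|] := eqVneq x.2 s.2; last exact: ecg_adj_other_output.
  rewrite st_flow; apply: ecg_adj_other_output xt _.
  by rewrite xs_out.
by rewrite /ecg_adj neq_xu us_flow x_in eqxx x_fanout orbT.
Qed.
End EnhancedConflictGraph.

Lemma cycle5_fork (k : 'I_5) : exists m a b c : 'I_5,
  [/\ [&& a != k, b != k & c != k], a != b,
      cycle5 m a, cycle5 m b & ~~ cycle5 m c].
Proof.
exists k, (inZp k.+1), (inZp k.+4), (inZp k.+2).
by case: k => -[|[|[|[|[|]]]]].
Qed.

Section InducedGrotzsch.
Variables (I O : finType) (phi : grotzsch_vertex -> subflow_t I O).
Hypothesis phi_inj : injective phi.
Hypothesis phi_adj : forall u v, ecg_adj (phi u) (phi v) = grotzsch u v.

Let hub := phi None.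
Let shadow k := phi (Some (inr k)).
Let orig k := phi (Some (inl k)).

Lemma shadow_neq k l : k != l -> shadow k != shadow l.
Proof. by move=> neq_kl; rewrite (inj_eq phi_inj); apply: contra neq_kl => /eqP[->]. Qed.

Lemma shadows_hub_output :
  exists k0, forall k, k != k0 -> hub.2 != (shadow k).2.
Proof.
case: (pickP (fun k => (shadow k).2 == hub.2)) => [k0 /eqP k0_hub | other_out].
  exists k0 => k neq_kk0; apply/eqP => hub_k.
  have := ecg_adj_same_output (shadow_neq neq_kk0).
  by rewrite phi_adj k0_hub hub_k => /(_ erefl).
by exists ord0 => k _; rewrite eq_sym other_out.
Qed.

Lemma no_induced_grotzsch : False.
Proof.
have [k0 hub_out] := shadows_hub_output.
have same_flow k l : k != k0 -> l != k0 -> (shadow k).1 = (shadow l).1.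
  move=> /hub_out kk0 /hub_out lk0.
  by apply: (ecg_common_neighbor_same_flow _ _ _ kk0 lk0); rewrite phi_adj.
have [m [a [b [c [/and3P[ak0 bk0 ck0] neq_ab ma mb mc]]]]] := cycle5_fork k0.
have neq_mc : orig m != shadow c by rewrite (inj_eq phi_inj).
have := ecg_adj_flow (same_flow _ _ ak0 bk0) (shadow_neq neq_ab) _ _
  (same_flow _ _ ck0 ak0) neq_mc.
by rewrite !phi_adj; move/(_ ma mb); apply/negP.
Qed.
End InducedGrotzsch.

Theorem corollary1 (I O : finType) (T : {set flow I O}) :
  traffic_pattern T -> ~ ecg_has_induced_grotzsch T.
Proof. by move=> _ [phi [phi_inj [_ phi_adj]]]; exact: no_induced_grotzsch phi_adj. Qed.
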